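(* Let $d_1,d_2\ge 2$ and let $\rho$ be a density matrix on $\mathbb{C}^{d_1}\otimes\mathbb{C}^{d_2}$. Let $\mathcal{P}=\{P_j\}_{j=1}^{d_1^2}$ be a general SIC-POVM on $\mathbb{C}^{d_1}$ with parameter $a_1$ and $\mathcal{Q}=\{Q_k\}_{k=1}^{d_2^2}$ a general SIC-POVM on $\mathbb{C}^{d_2}$ with parameter $a_2$. Let $d=\min\{d_1^2,d_2^2\}$ and define $$J(\rho)=\max_{\sigma,\tau}\sum_{j=1}^{d}\mathrm{Tr}\big[(P_{\sigma(j)}\otimes Q_{\tau(j)})\rho\big],$$ where the maximum runs over all injective maps $\sigma:\{1,\dots,d\}\to\{1,\dots,d_1^2\}$ and $\tau:\{1,\dots,d\}\to\{1,\dots,d_2^2\}$. If $\rho$ is separable, then $$J(\rho)\le \frac12\left[\frac{a_1d_1^2+1}{d_1(d_1+1)}+\frac{a_2d_2^2+1}{d_2(d_2+1)}\right].$$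
   Context: A general SIC-POVM on $\mathbb{C}^{n}$ with parameter $a$ is a set of $n^2$ positive semidefinite operators $\{P_\alpha\}_{\alpha=1}^{n^2}$ on $\mathbb{C}^{n}$ such that $\sum_{\alpha=1}^{n^2}P_\alpha=I$, $\mathrm{Tr}(P_\alpha^2)=a$ for all $\alpha$, and $\mathrm{Tr}(P_\alpha P_\beta)=\frac{1-na}{n(n^2-1)}$ for all $\alpha\neq\beta$; here $\frac{1}{n^3}<a\le\frac{1}{n^2}$. A density matrix on $\mathbb{C}^{d_1}\otimes\mathbb{C}^{d_2}$ is separable if it is a convex combination of product states $\rho_A\otimes\rho_B$. *)

(* Complex scalars: an arbitrary numClosedFieldType C
   (e.g. algC; the complex numbers are a model). *)
From HB Require Import structures.
From mathcomp Require Import all_boot all_order all_algebra.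
Set Implicit Arguments. Unset Strict Implicit. Unset Printing Implicit Defensive.
Import Order.TTheory GRing.Theory Num.Theory.
Local Open Scope ring_scope.

Definition adjmx (C : numClosedFieldType) (m n : nat) (A : 'M[C]_(m, n)) : 'M[C]_(n, m) :=
  map_mx Num.conj (A ^T).

(* Positive semidefinite: <x, A x> is real and >= 0 for all vectors x. *)
Definition psd (C : numClosedFieldType) (n : nat) (A : 'M[C]_n) : Prop :=
  forall x : 'cV[C]_n, 0 <= (adjmx x *m A *m x) 0 0.

Definition density (C : numClosedFieldType) (n : nat) (A : 'M[C]_n) : Prop :=
  psd A /\ \tr A = 1.

(* Index splitting for the Kronecker product: k = (k %/ n) * n + (k %% n). *)
Lemma kron_divP (m n : nat) (k : 'I_(m * n)) : (k %/ n < m)%N.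
Proof.
move: (nat_of_ord k) (ltn_ord k) => {}k.
case: n => [|n]; first by rewrite muln0.
by rewrite ltn_divLR.
Qed.

Lemma kron_modP (m n : nat) (k : 'I_(m * n)) : (k %% n < n)%N.
Proof.
move: (nat_of_ord k) (ltn_ord k) => {}k.
case: n => [|n]; first by rewrite muln0.
by rewrite ltn_pmod.
Qed.

Definition kdiv (m n : nat) (k : 'I_(m * n)) : 'I_m := Ordinal (kron_divP k).
Definition kmod (m n : nat) (k : 'I_(m * n)) : 'I_n := Ordinal (kron_modP k).

Definition kron (C : numClosedFieldType) (m n : nat)
  (A : 'M[C]_m) (B : 'M[C]_n) : 'M[C]_(m * n) :=
  \matrix_(i, j) (A (kdiv i) (kdiv j) * B (kmod i) (kmod j)).

Definition gen_SIC_POVM (C : numClosedFieldType) (n : nat) (a : C)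
  (P : 'I_(n ^ 2) -> 'M[C]_n) : Prop :=
  [/\ forall al, psd (P al),
      \sum_(al < n ^ 2) P al = 1%:M,
      forall al, \tr (P al *m P al) = a
    & forall al be, al != be ->
        \tr (P al *m P be) = (1 - n%:R * a) / (n%:R * (n%:R ^+ 2 - 1))].

Definition separable (C : numClosedFieldType) (d1 d2 : nat)
  (rho : 'M[C]_(d1 * d2)) : Prop :=
  exists (r : nat) (p : 'I_r -> C) (A : 'I_r -> 'M[C]_d1) (B : 'I_r -> 'M[C]_d2),
    [/\ forall i, 0 <= p i,
        \sum_(i < r) p i = 1,
        forall i, density (A i),
        forall i, density (B i)
      & rho = \sum_(i < r) p i *: kron (A i) (B i)].

Definition J_term (C : numClosedFieldType) (d1 d2 : nat)
  (P : 'I_(d1 ^ 2) -> 'M[C]_d1) (Q : 'I_(d2 ^ 2) -> 'M[C]_d2)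
  (rho : 'M[C]_(d1 * d2))
  (sigma : 'I_(minn (d1 ^ 2) (d2 ^ 2)) -> 'I_(d1 ^ 2))
  (tau : 'I_(minn (d1 ^ 2) (d2 ^ 2)) -> 'I_(d2 ^ 2)) : C :=
  \sum_(j < minn (d1 ^ 2) (d2 ^ 2)) \tr (kron (P (sigma j)) (Q (tau j)) *m rho).

From HB Require Import structures.
From mathcomp Require Import all_boot all_order all_algebra.
From mathcomp Require Import mxtens ring.
Import Order.TTheory GRing.Theory Num.Theory.
Local Open Scope ring_scope.
Set Implicit Arguments. Unset Strict Implicit.

(* For a product state [A (x) B] the correlation sum is
   [\sum_j x (sigma j) * y (tau j)] for the probability vectors [x al = Tr (P al A)]
   and [y be = Tr (Q be B)], hence at most [(\sum x al ^+ 2 + \sum y be ^+ 2) / 2] by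
   AM-GM.  For a general SIC-POVM with [Tr (P al P be) = b] off the diagonal, the
   index of coincidence [\sum x al ^+ 2] is at most
   [(a - b) Tr (A ^+ 2) + b n <= (a n ^+ 2 + 1) / (n (n + 1))]: this is
   [0 <= Tr (H ^+ 2)] for the hermitian matrix [H = \sum x al P al - (a - b) A - b n].
   A separable state is a convex combination of product states, and the correlation
   sum is linear in the state. *)

Lemma ler_sum_inj (R : numDomainType) (I J : finType) (s : I -> J) (f : J -> R) :
  injective s -> (forall j, 0 <= f j) -> \sum_i f (s i) <= \sum_j f j.
Proof.
move=> s_inj f_ge0; rewrite -(big_imset _ (in2W s_inj)) /=.
by rewrite [leRHS](bigID (mem (s @: I))) /= lerDl sumr_ge0.
Qed.

Section Hermitian.
Variable C : numClosedFieldType.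

Definition hermmx n (A : 'M[C]_n) := forall i j, A j i = (A i j)^*.

Lemma hermmx0 n : hermmx (0 : 'M[C]_n).
Proof. by move=> i j; rewrite !mxE conjC0. Qed.

Lemma hermmx1 n : hermmx (1%:M : 'M[C]_n).
Proof. by move=> i j; rewrite !mxE conjC_nat eq_sym. Qed.

Lemma hermmxD n (X Y : 'M[C]_n) : hermmx X -> hermmx Y -> hermmx (X + Y).
Proof. by move=> hX hY i j; rewrite !mxE hX hY rmorphD. Qed.

Lemma hermmxB n (X Y : 'M[C]_n) : hermmx X -> hermmx Y -> hermmx (X - Y).
Proof. by move=> hX hY i j; rewrite !mxE hX hY rmorphB. Qed.

Lemma hermmxZ n (c : C) (X : 'M[C]_n) :
  c \is Num.real -> hermmx X -> hermmx (c *: X).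
Proof. by move=> /CrealP hc hX i j; rewrite !mxE hX rmorphM /= hc. Qed.

Lemma hermmx_sum n (I : finType) (F : I -> 'M[C]_n) :
  (forall i, hermmx (F i)) -> hermmx (\sum_i F i).
Proof. by move=> hF; apply: big_ind => //; [apply: hermmx0 | apply: hermmxD]. Qed.

Lemma hermmx_mxtrace_mul_real n (X Y : 'M[C]_n) :
  hermmx X -> hermmx Y -> \tr (X *m Y) \is Num.real.
Proof.
move=> hX hY; apply/CrealP; rewrite /mxtrace rmorph_sum.
under eq_bigr do rewrite mxE rmorph_sum.
rewrite exchange_big; apply: eq_bigr => i _; rewrite mxE.
by apply: eq_bigr => j _; rewrite rmorphM /= -hX -hY.
Qed.

Lemma hermmx_mxtrace_sqr_ge0 n (H : 'M[C]_n) : hermmx H -> 0 <= \tr (H *m H).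
Proof.
move=> hH; apply: sumr_ge0 => i _; rewrite mxE.
by apply: sumr_ge0 => j _; rewrite [H j i]hH mul_conjC_ge0.
Qed.

End Hermitian.

Section PositiveSemidefinite.
Variable C : numClosedFieldType.

Definition qform n (A : 'M[C]_n) (x : 'cV[C]_n) := (adjmx x *m A *m x) 0 0.

Lemma adjmxD m n (X Y : 'M[C]_(m, n)) : adjmx (X + Y) = adjmx X + adjmx Y.
Proof. by apply/matrixP=> i j; rewrite !mxE rmorphD. Qed.

Lemma adjmxZ m n (s : C) (X : 'M[C]_(m, n)) : adjmx (s *: X) = s^* *: adjmx X.
Proof. by apply/matrixP=> i j; rewrite !mxE rmorphM. Qed.

Lemma adjmx_delta n (i : 'I_n) : adjmx ('e_i)^T = 'e_i :> 'rV[C]_n.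
Proof. by apply/matrixP=> k l; rewrite !mxE conjC_nat. Qed.

Lemma delta_mul_delta n (A : 'M[C]_n) i j :
  (('e_i : 'rV_n) *m A *m ('e_j : 'rV_n)^T) 0 0 = A i j.
Proof. by rewrite -rowE trmx_delta -colE !mxE. Qed.

Lemma qform_delta2 n (A : 'M[C]_n) i j (s t : C) :
  qform A (s *: ('e_i)^T + t *: ('e_j)^T) =
  s^* * s * A i i + s^* * t * A i j + t^* * s * A j i + t^* * t * A j j.
Proof.
have addE (X Y : 'M[C]_1) : (X + Y) 0 0 = X 0 0 + Y 0 0 by rewrite mxE.
have scaleE r (X : 'M[C]_1) : (r *: X) 0 0 = r * X 0 0 by rewrite mxE.
rewrite /qform adjmxD !adjmxZ !mulmxDl !mulmxDr -!scalemxAl -!scalemxAr.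
by rewrite !adjmx_delta !addE !scaleE !delta_mul_delta; ring.
Qed.

Section Psd.
Variables (n : nat) (A : 'M[C]_n).
Hypothesis psdA : psd A.

Lemma psd_diag_ge0 i : 0 <= A i i.
Proof. by have := psdA ('e_i)^T; rewrite /qform adjmx_delta delta_mul_delta. Qed.

Lemma psd_hermmx : hermmx A.
Proof.
move=> i j.
have diagR : A i i + A j j \is Num.real by rewrite realD ?ger0_real ?psd_diag_ge0.
have zR : A i j + A j i \is Num.real.
  have : qform A (1 *: ('e_i)^T + 1 *: ('e_j)^T) \is Num.real := ger0_real (psdA _).
  have -> : qform A (1 *: ('e_i)^T + 1 *: ('e_j)^T) = A i j + A j i + (A i i + A j j).
    by rewrite qform_delta2 conjC1; ring.
  by rewrite rpredDr.
have sqri : - 'i * 'i = 1 :> C by rewrite mulNr -expr2 sqrCi opprK.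
have wR : 'i * (A i j - A j i) \is Num.real.
  have : qform A (1 *: ('e_i)^T + 'i *: ('e_j)^T) \is Num.real := ger0_real (psdA _).
  have -> : qform A (1 *: ('e_i)^T + 'i *: ('e_j)^T)
            = 'i * (A i j - A j i) + (A i i + A j j).
    by rewrite qform_delta2 conjC1 conjCi sqri; ring.
  by rewrite rpredDr.
have iw : 'i * ('i * (A i j - A j i)) = A j i - A i j.
  by rewrite mulrA -expr2 sqrCi; ring.
(* [A i j] and [A j i] are the conjugate combinations [(z -+ 'i w) / 2] of the reals
   [z] and [w]. *)
set z := A i j + A j i in zR *; set w := 'i * _ in wR iw.
have -> : A i j = (z - 'i * w) / 2 by rewrite iw /z; field.
have -> : A j i = (z + 'i * w) / 2 by rewrite iw /z; field.
rewrite fmorph_div rmorphB rmorphM /= conjCi conjC_nat (CrealP zR) (CrealP wR).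
by rewrite mulNr opprK.
Qed.

Lemma psd_minor_le i j : A i j * (A i j)^* <= A i i * A j j.
Proof.
set u := A i i; set v := A j j; set w := A i j.
have u0 : 0 <= u := psd_diag_ge0 i; have v0 : 0 <= v := psd_diag_ge0 j.
have qformE s t : qform A (s *: ('e_i)^T + t *: ('e_j)^T)
    = s^* * s * u + s^* * t * w + t^* * s * w^* + t^* * t * v.
  by rewrite qform_delta2 [A j i]psd_hermmx.
have hv : 0 <= v * (u * v - w * w^*).
  have := psdA (v *: ('e_i)^T + (- w^*) *: ('e_j)^T).
  rewrite -/(qform _ _) qformE (CrealP (ger0_real v0)) rmorphN /= conjCK.
  by congr (_ <= _); ring.
have hu : 0 <= u * (u * v - w * w^*).
  have := psdA ((- w) *: ('e_i)^T + u *: ('e_j)^T).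
  rewrite -/(qform _ _) qformE (CrealP (ger0_real u0)) rmorphN /=.
  by congr (_ <= _); ring.
rewrite -subr_ge0.
have [uv0|uvn] := eqVneq (u + v) 0; last first.
  have uvp : 0 < u + v by rewrite lt0r uvn addr_ge0.
  by rewrite -(pmulr_rge0 _ uvp) mulrDl addr_ge0.
have /andP[/eqP u00 /eqP v00] : (u == 0) && (v == 0) by rewrite -paddr_eq0 ?uv0.
have := psdA (1 *: ('e_i)^T + (- w^*) *: ('e_j)^T).
rewrite -/(qform _ _) qformE conjC1 rmorphN /= conjCK u00 v00.
have -> : 1 * 1 * 0 + 1 * - w^* * w + - w * 1 * w^* + - w * - w^* * 0
   = - (w * w^*) *+ 2 by rewrite mulr2n; ring.
rewrite pmulrn_lge0 // oppr_ge0 => ww0.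
have -> : w * w^* = 0 by apply/eqP; rewrite eq_le ww0 mul_conjC_ge0.
by rewrite mul0r subrr.
Qed.

Lemma psd_mxtrace_sqr_le : \tr (A *m A) <= (\tr A) ^+ 2.
Proof.
rewrite expr2 mulr_suml; apply: ler_sum => i _.
rewrite mxE mulr_sumr; apply: ler_sum => j _.
by rewrite [A j i]psd_hermmx psd_minor_le.
Qed.

End Psd.
End PositiveSemidefinite.

Section GeneralSIC.
Variables (C : numClosedFieldType) (n : nat) (a : C) (P : 'I_(n ^ 2) -> 'M[C]_n).
Hypotheses (n_ge2 : (2 <= n)%N) (a_gt : 1 / n%:R ^+ 3 < a)
           (sicP : gen_SIC_POVM a P).

Local Notation N := (n%:R : C).
Let b := (1 - N * a) / (N * (N ^+ 2 - 1)).

Let N_gt0 : 0 < N.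
Proof. by rewrite ltr0n (leq_trans _ n_ge2). Qed.

Let N2B1_gt0 : 0 < N ^+ 2 - 1.
Proof.
rewrite subr_gt0 -natrX ltr1n (@leq_trans (2 ^ 2)) //.
by rewrite leq_exp2r.
Qed.

Lemma sic_mxtrace_mul al be : \tr (P al *m P be) = if al == be then a else b.
Proof.
case: sicP => _ _ Pdiag Poff.
by case: eqVneq => [-> | /Poff]; [apply: Pdiag | rewrite /b].
Qed.

Lemma sic_param_eq : N * (a - b) + b * N ^+ 3 = 1.
Proof. by rewrite /b; field; rewrite !lt0r_neq0. Qed.

Lemma sic_off_lt_diag : 0 < a - b.
Proof.
have D_gt0 : 0 < N * (N ^+ 2 - 1) by rewrite mulr_gt0.
rewrite subr_gt0 -(ltr_pM2r D_gt0) /b mulfVK ?lt0r_neq0 //.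
have -> : a * (N * (N ^+ 2 - 1)) = a * N ^+ 3 - N * a by ring.
by rewrite ltrD2r -ltr_pdivrMr // exprn_gt0.
Qed.

Lemma sic_param_real : a \is Num.real.
Proof. by apply/gtr0_real/(lt_trans _ a_gt); rewrite divr_gt0 ?exprn_gt0. Qed.

Lemma sic_hermmx al : hermmx (P al).
Proof. by case: sicP => Ppsd _ _ _; apply: psd_hermmx. Qed.

Lemma sic_mxtrace al : \tr (P al) = N^-1.
Proof.
case: sicP => _ Psum _ _.
rewrite -[P al]mulmx1 -Psum mulmx_sumr linear_sum (bigD1 al) //=.
rewrite sic_mxtrace_mul eqxx (eq_bigr (fun _ => b)); last first.
  by move=> be /negPf neq; rewrite sic_mxtrace_mul eq_sym neq.
have card : ((n ^ 2).-1)%:R = N ^+ 2 - 1.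
  by rewrite -subn1 natrB ?expn_gt0 ?(leq_trans _ n_ge2) // natrX.
rewrite sumr_const cardC1 card_ord -[b *+ _]mulr_natr card.
apply: (mulfI (lt0r_neq0 N_gt0)); rewrite mulfV ?lt0r_neq0 // -[RHS]sic_param_eq; ring.
Qed.

Section Frame.
Variable A : 'M[C]_n.
Hypothesis densA : density A.

Local Notation x al := (\tr (P al *m A)).
Let M := \sum_al x al *: P al.
Local Notation S := (\sum_al x al ^+ 2).

Lemma sic_prob_sum : \sum_al x al = 1.
Proof.
case: sicP densA => _ Psum _ _ [_ trA].
by rewrite -linear_sum -mulmx_suml Psum mul1mx; apply: trA.
Qed.

Lemma sic_prob_real al : x al \is Num.real.
Proof.
apply: hermmx_mxtrace_mul_real (sic_hermmx al) _.
by case: densA => psdA _; apply: psd_hermmx.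
Qed.

Let mxtrace_mul_frame al : \tr (P al *m M) = (a - b) * x al + b.
Proof.
rewrite mulmx_sumr linear_sum (bigD1 al) //= -scalemxAr mxtraceZ sic_mxtrace_mul eqxx.
rewrite (eq_bigr (fun be => b * x be)); last first.
  by move=> be /negPf neq; rewrite -scalemxAr mxtraceZ sic_mxtrace_mul eq_sym neq mulrC.
rewrite -mulr_sumr.
have -> : \sum_(be | be != al) x be = 1 - x al.
  by rewrite -sic_prob_sum [in RHS](bigD1 al) //=; ring.
ring.
Qed.

Let mxtrace_frame_sqr : \tr (M *m M) = (a - b) * S + b.
Proof.
rewrite {1}/M mulmx_suml linear_sum /=.
under eq_bigr do rewrite -scalemxAl mxtraceZ mxtrace_mul_frame.
have -> : \sum_al x al * ((a - b) * x al + b)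
          = \sum_al ((a - b) * x al ^+ 2 + b * x al).
  by apply: eq_bigr => al _; ring.
by rewrite big_split /= -!mulr_sumr sic_prob_sum mulr1.
Qed.

Let mxtrace_frame_mul : \tr (M *m A) = S.
Proof.
rewrite mulmx_suml linear_sum /=; apply: eq_bigr => al _.
by rewrite -scalemxAl mxtraceZ expr2.
Qed.

Let mxtrace_frame : \tr M = N^-1.
Proof.
rewrite linear_sum /= (eq_bigr (fun al => x al * N^-1)); last first.
  by move=> al _; rewrite mxtraceZ sic_mxtrace.
by rewrite -mulr_suml sic_prob_sum mul1r.
Qed.

Lemma sic_prob_sum_sqr_le : S <= (a * N ^+ 2 + 1) / (N * (N + 1)).
Proof.
have -> : (a * N ^+ 2 + 1) / (N * (N + 1)) = a - b + b * N.
  by rewrite /b; field; rewrite !lt0r_neq0 // addr_gt0.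
have [psdA trA] := densA.
have abR : a - b \is Num.real := gtr0_real sic_off_lt_diag.
have bR : b \is Num.real by rewrite -(subKr a b) realB ?sic_param_real.
have hermM : hermmx M.
  by apply: hermmx_sum => al; apply: hermmxZ (sic_prob_real al) (sic_hermmx al).
set H := M - (a - b) *: A - (b * N) *: 1%:M.
have hermH : hermmx H.
  apply: hermmxB; first apply: hermmxB => //.
    exact: hermmxZ abR (psd_hermmx psdA).
  by apply: hermmxZ; [rewrite realM ?realn | apply: hermmx1].
have := hermmx_mxtrace_sqr_ge0 hermH.
(* the terms of [tr (H H)] not involving [A] cancel by [sic_param_eq] *)
have -> : \tr (H *m H) = (a - b) * ((a - b) * \tr (A *m A) + b * N - S).
  rewrite /H !(mulmxBl, mulmxBr) -!scalemxAl -!scalemxAr !(mul1mx, mulmx1).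
  rewrite !raddfB /= !mxtraceZ mxtrace1 mxtrace_frame_sqr mxtrace_frame_mul.
  rewrite (mxtrace_mulC A) mxtrace_frame_mul mxtrace_frame trA.
  transitivity ((a - b) * ((a - b) * \tr (A *m A) + b * N - S)
                + b * (N * (a - b) + b * N ^+ 3 - 1)).
    by field; rewrite lt0r_neq0.
  by rewrite sic_param_eq subrr mulr0 addr0.
rewrite pmulr_rge0 ?sic_off_lt_diag // subr_ge0 => /le_trans; apply.
rewrite lerD2r ler_piMr ?(ltW sic_off_lt_diag) //.
by rewrite -(expr1n _ 2) -trA psd_mxtrace_sqr_le.
Qed.

End Frame.
End GeneralSIC.

Section Kronecker.
Variable C : numClosedFieldType.

Lemma kron_tensmx m n (X : 'M[C]_m) (Y : 'M[C]_n) : kron X Y = X *t Y.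
Proof.
by apply/matrixP => i j; rewrite !mxE; congr (X _ _ * Y _ _); apply: val_inj.
Qed.

Lemma mxtrace_tensmx m n (X : 'M[C]_m) (Y : 'M[C]_n) : \tr (X *t Y) = \tr X * \tr Y.
Proof. by rewrite /mxtrace mxtens.mulr_sum; apply: eq_bigr => k _; rewrite mxE. Qed.

Lemma mxtrace_kron_mul m n (X A : 'M[C]_m) (Y B : 'M[C]_n) :
  \tr (kron X Y *m kron A B) = \tr (X *m A) * \tr (Y *m B).
Proof. by rewrite !kron_tensmx tensmx_mul mxtrace_tensmx. Qed.

End Kronecker.

Lemma J_term_sum_kron (C : numClosedFieldType) d1 d2 (P : 'I_(d1 ^ 2) -> 'M[C]_d1)
    (Q : 'I_(d2 ^ 2) -> 'M[C]_d2) r (p : 'I_r -> C) A B sigma tau :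
  J_term P Q (\sum_(i < r) p i *: kron (A i) (B i)) sigma tau =
  \sum_(i < r) p i *
    \sum_j \tr (P (sigma j) *m A i) * \tr (Q (tau j) *m B i).
Proof.
rewrite /J_term; under eq_bigr do rewrite mulmx_sumr linear_sum /=.
rewrite exchange_big; apply: eq_bigr => i _; rewrite mulr_sumr.
by apply: eq_bigr => j _; rewrite -scalemxAr mxtraceZ mxtrace_kron_mul.
Qed.

Lemma sic_product_correlation_le (C : numClosedFieldType) d1 d2
    (hd1 : (2 <= d1)%N) (hd2 : (2 <= d2)%N) (a1 a2 : C)
    (ha1 : 1 / (d1%:R ^+ 3) < a1) (ha2 : 1 / (d2%:R ^+ 3) < a2)
    (P : 'I_(d1 ^ 2) -> 'M[C]_d1) (Q : 'I_(d2 ^ 2) -> 'M[C]_d2)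
    (hP : gen_SIC_POVM a1 P) (hQ : gen_SIC_POVM a2 Q) (A : 'M[C]_d1) (B : 'M[C]_d2)
    (densA : density A) (densB : density B) k
    (sigma : 'I_k -> 'I_(d1 ^ 2)) (tau : 'I_k -> 'I_(d2 ^ 2)) :
  injective sigma -> injective tau ->
  \sum_j \tr (P (sigma j) *m A) * \tr (Q (tau j) *m B) <=
    (1 / 2) * ((a1 * d1%:R ^+ 2 + 1) / (d1%:R * (d1%:R + 1))
             + (a2 * d2%:R ^+ 2 + 1) / (d2%:R * (d2%:R + 1))).
Proof.
move=> sigma_inj tau_inj.
have xR al : \tr (P al *m A) \is Num.real := sic_prob_real hP densA al.
have yR be : \tr (Q be *m B) \is Num.real := sic_prob_real hQ densB be.
apply: (@le_trans _ _
  (\sum_j (\tr (P (sigma j) *m A) ^+ 2 + \tr (Q (tau j) *m B) ^+ 2) / 2)).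
  by apply: ler_sum => j _; apply: (real_leif_mean_square (xR _) (yR _)).1.
rewrite -mulr_suml big_split /= mulrC mul1r ler_wpM2l ?invr_ge0 ?ler0n //.
apply: lerD.
  apply: le_trans (sic_prob_sum_sqr_le hd1 ha1 hP densA).
  apply: (ler_sum_inj (f := fun al => \tr (P al *m A) ^+ 2)) => // al.
  by rewrite real_exprn_even_ge0.
apply: le_trans (sic_prob_sum_sqr_le hd2 ha2 hQ densB).
apply: (ler_sum_inj (f := fun be => \tr (Q be *m B) ^+ 2)) => // be.
by rewrite real_exprn_even_ge0.
Qed.

Theorem theorem1 (C : numClosedFieldType) (d1 d2 : nat)
  (hd1 : (2 <= d1)%N) (hd2 : (2 <= d2)%N)
  (rho : 'M[C]_(d1 * d2)) (hrho : density rho)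
  (a1 a2 : C)
  (ha1 : 1 / (d1%:R ^+ 3) < a1) (ha1' : a1 <= 1 / (d1%:R ^+ 2))
  (ha2 : 1 / (d2%:R ^+ 3) < a2) (ha2' : a2 <= 1 / (d2%:R ^+ 2))
  (P : 'I_(d1 ^ 2) -> 'M[C]_d1) (Q : 'I_(d2 ^ 2) -> 'M[C]_d2)
  (hP : gen_SIC_POVM a1 P) (hQ : gen_SIC_POVM a2 Q)
  (hsep : separable rho) :
  forall (sigma : 'I_(minn (d1 ^ 2) (d2 ^ 2)) -> 'I_(d1 ^ 2))
         (tau : 'I_(minn (d1 ^ 2) (d2 ^ 2)) -> 'I_(d2 ^ 2)),
    injective sigma -> injective tau ->
    J_term P Q rho sigma tau <=
      (1 / 2) * ((a1 * d1%:R ^+ 2 + 1) / (d1%:R * (d1%:R + 1))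
               + (a2 * d2%:R ^+ 2 + 1) / (d2%:R * (d2%:R + 1))).
Proof.
move=> sigma tau sigma_inj tau_inj.
have [r [p [A [B [p_ge0 p_sum densA densB ->]]]]] := hsep.
have corr_le i := sic_product_correlation_le hd1 hd2 ha1 ha2 hP hQ
  (densA i) (densB i) sigma_inj tau_inj.
rewrite J_term_sum_kron.
apply: le_trans (ler_sum _ (fun i _ => ler_wpM2l (p_ge0 i) (corr_le i))) _.
by rewrite -mulr_suml p_sum !mul1r.
Qed.
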